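(* There is an absolute constant $C>0$ (independent of $K$, $V_T$, $T$) such that for every $T\geq 1$, every $K\geq 2$, every $V_T\in[K^{-1},K^{-1}T]$, and every admissible policy $\pi\in\mathcal{P}$, when all rewards are Bernoulli, \[ \mathcal{R}^{\pi}(\mathcal{V},T)\;\geq\; C\,(K V_T)^{1/3}\,T^{2/3}. \]
   Context: Multi-armed bandit with arms $\mathcal{K}=\{1,\dots,K\}$ and decision epochs $t\in\{1,\dots,T\}$. Pulling arm $k$ at epoch $t$ yields a reward $X_t^k\in[0,1]$ with mean $\mu_t^k=\mathbb{E}[X_t^k]$; here $X_t^k$ is Bernoulli with parameter $\mu_t^k$, rewards independent across epochs. Write $\mu=(\mu_t^k)_{k\in\mathcal{K},t\le T}$ and $\mu_t^*=\max_{k}\mu_t^k$. For a variation budget $V_T>0$, the temporal uncertainty set is $\mathcal{V}=\{\mu\in[0,1]^{K\times T}:\ \sum_{t=1}^{T-1}\sup_{k\in\mathcal{K}}|\mu_t^k-\mu_{t+1}^k|\le V_T\}$. An admissible policy $\pi\in\mathcal{P}$: given a random variable $U$ on some probability space (independent of the rewards), measurable maps $\pi_1(U)\in\mathcal{K}$ and $\pi_t(X_{t-1}^\pi,\dots,X_1^\pi,U)\in\mathcal{K}$ for $t\ge2$, where $X_s^\pi$ is the reward observed at epoch $s$ from the pulled arm $\pi_s$ (non-anticipating, possibly randomized). The regret is $\mathcal{R}^{\pi}(\mathcal{V},T)=\sup_{\mu\in\mathcal{V}}\big\{\sum_{t=1}^T\mu_t^*-\mathbb{E}^\pi[\sum_{t=1}^T\mu_t^{\pi_t}]\big\}$,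 the expectation over rewards and the policy's randomization. *)

From Stdlib Require Import Reals List.
Open Scope R_scope.

(* Arms are 0..K-1, epochs are 0..T-1 (epoch t of the paper is index t-1).
   A mean profile is mu : nat -> nat -> R, mu t k = mean of arm k at epoch t. *)

Fixpoint maxK (f : nat -> R) (K : nat) : R :=
  match K with
  | O => 0
  | S O => f O
  | S K' => Rmax (maxK f K') (f K')
  end.

Fixpoint sumR (f : nat -> R) (n : nat) : R :=
  match n with
  | O => 0
  | S n' => sumR f n' + f n'
  end.

Definition in_V (K T : nat) (VT : R) (mu : nat -> nat -> R) : Prop :=
  (forall t k, (t < T)%nat -> (k < K)%nat -> 0 <= mu t k <= 1) /\
  sumR (fun t => maxK (fun k => Rabs (mu t k - mu (S t) k)) K) (T - 1) <= VT.

(* A deterministic non-anticipating policy: maps the history of observed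
   (Bernoulli, hence boolean) rewards, most recent first, to an arm. *)
Definition det_policy := list bool -> nat.

Fixpoint exp_reward (p : det_policy) (mu : nat -> nat -> R)
    (t : nat) (h : list bool) (n : nat) : R :=
  match n with
  | O => 0
  | S n' =>
      let k := p h in
      mu t k
      + mu t k * exp_reward p mu (S t) (true :: h) n'
      + (1 - mu t k) * exp_reward p mu (S t) (false :: h) n'
  end.

(* A randomized admissible policy: a probability distribution (weights w on
   indices 0..m-1) over deterministic policies ps i.  Regret against mu: *)
Definition regret (K T : nat) (m : nat) (w : nat -> R) (ps : nat -> det_policy)
    (mu : nat -> nat -> R) : R :=
  sumR (fun t => maxK (mu t) K) T
  - sumR (fun i => w i * exp_reward (ps i) mu 0 nil T) m.

Definition is_randomized_policy (K m : nat) (w : nat -> R) (ps : nat -> det_policy) : Prop :=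
  (forall i, (i < m)%nat -> 0 <= w i) /\
  sumR w m = 1 /\
  (forall i h, (i < m)%nat -> (ps i h < K)%nat).

From Stdlib Require Import Reals List Lra Lia Psatz ZArith.
Open Scope R_scope.

(* Split the horizon into batches of length D.  In every batch one arm, drawn
   uniformly and independently across batches, has mean 1/2 + e and all other
   arms have mean 1/2; moving the good arm only at batch boundaries costs a
   variation of e per boundary, i.e. about e T / D in total.  Within a batch,
   as long as an arm has been pulled fewer than m ~ 3D/(2K) times the policy
   cannot tell it from a fair coin: the second moment of the likelihood ratio,
   stopped at the m-th pull, is at most (1 + 4e^2)^m, close to 1 when e^2 m is
   small.  By Markov's inequality most arms are pulled fewer than m times under
   the null, so, averaged over the good arm, a constant fraction of each batch
   misses it and the regret is of order e T.  Choosing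
   D ~ (K T^2 / V^2)^(1/3) and e ~ sqrt(K/D) satisfies both constraints and
   gives the rate (K V)^(1/3) T^(2/3). *)

Lemma sumR_ext (f g : nat -> R) (n : nat) :
  (forall i, (i < n)%nat -> f i = g i) -> sumR f n = sumR g n.
Proof.
  induction n as [|n IH]; intros Hfg; simpl; [reflexivity|].
  rewrite IH by (intros; apply Hfg; lia). rewrite Hfg by lia. reflexivity.
Qed.

Lemma sumR_lin (a b : R) (f g : nat -> R) (n : nat) :
  sumR (fun i => a * f i + b * g i) n = a * sumR f n + b * sumR g n.
Proof. induction n as [|n IH]; simpl; [ring|]. rewrite IH. ring. Qed.

Lemma sumR_scal (a : R) (f : nat -> R) (n : nat) :
  sumR (fun i => a * f i) n = a * sumR f n.
Proof. induction n as [|n IH]; simpl; [ring|]. rewrite IH. ring. Qed.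

Lemma sumR_const (c : R) (n : nat) : sumR (fun _ => c) n = INR n * c.
Proof. induction n as [|n IH]; [simpl; ring|]. rewrite S_INR. simpl sumR. rewrite IH. ring. Qed.

Lemma sumR_le (f g : nat -> R) (n : nat) :
  (forall i, (i < n)%nat -> f i <= g i) -> sumR f n <= sumR g n.
Proof.
  induction n as [|n IH]; intros Hfg; simpl; [lra|].
  apply Rplus_le_compat; [apply IH; intros; apply Hfg|apply Hfg]; lia.
Qed.

Lemma sumR_shift (g : nat -> R) (n : nat) :
  g O + sumR (fun i => g (S i)) n = sumR g n + g n.
Proof. induction n as [|n IH]; simpl; [ring|]. rewrite <- IH. ring. Qed.

Lemma sumR_indicator (k K : nat) :
  (k < K)%nat -> sumR (fun i => if Nat.eqb k i then 1 else 0) K = 1.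
Proof.
  induction K as [|K IH]; intros Hk; [lia|]. simpl.
  destruct (Nat.eqb_spec k K) as [->|HkK].
  - rewrite (sumR_ext _ (fun _ => 0)), sumR_const; [ring|].
    intros i Hi. destruct (Nat.eqb_spec K i); [lia|reflexivity].
  - rewrite IH by lia. ring.
Qed.

Lemma maxK_ge (f : nat -> R) (K j : nat) : (j < K)%nat -> f j <= maxK f K.
Proof.
  induction K as [|[|K] IH]; intros Hj; [lia| |].
  - replace j with O by lia. simpl. lra.
  - change (maxK f (S (S K))) with (Rmax (maxK f (S K)) (f (S K))).
    destruct (Nat.eq_dec j (S K)) as [->|]; [apply Rmax_r|].
    eapply Rle_trans; [apply IH; lia|apply Rmax_l].
Qed.

Lemma maxK_le (f : nat -> R) (K : nat) (c : R) :
  (1 <= K)%nat -> (forall k, (k < K)%nat -> f k <= c) -> maxK f K <= c.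
Proof.
  induction K as [|[|K] IH]; intros HK Hf; [lia| |].
  - simpl. apply Hf. lia.
  - change (maxK f (S (S K))) with (Rmax (maxK f (S K)) (f (S K))).
    apply Rmax_lub; [apply IH|apply Hf]; auto; lia.
Qed.

Lemma Rle_inv_mult_l (k x y : R) : 0 < k -> k * x <= y -> x <= / k * y.
Proof.
  intros Hk Hxy. apply (Rmult_le_reg_l k); [exact Hk|].
  rewrite <- Rmult_assoc, Rinv_r, Rmult_1_l; lra.
Qed.

Lemma Rle_of_pow2_le (x y : R) : 0 <= y -> x^2 <= y^2 -> x <= y.
Proof. intros Hy Hxy. destruct (Rle_dec x y); [assumption|nra]. Qed.

Lemma Rle_of_pow3_le (x y : R) : x^3 <= y^3 -> x <= y.
Proof.
  intros Hxy. destruct (Rle_dec x y) as [|Hyx]; [assumption|].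
  assert (0 < (x - y) * ((x + y / 2)^2 + 3 / 4 * y^2)).
  { apply Rmult_lt_0_compat; [lra|].
    destruct (Req_dec y 0) as [->|Hy]; [nra|].
    pose proof (pow2_ge_0 (x + y / 2)).
    assert (0 < y^2) by (rewrite <- Rsqr_pow2; apply Rsqr_pos_lt; exact Hy). lra. }
  nra.
Qed.

(* [tree_expect p mu t h n f G] is the expectation, when policy [p] plays epochs
   [t .. t+n-1] from history [h] against Bernoulli means [mu], of
   [sum_s f s h_s + G h_(t+n)], where [h_s] is the history before epoch [s]. *)
Fixpoint tree_expect (p : det_policy) (mu : nat -> nat -> R) (t : nat) (h : list bool)
    (n : nat) (f : nat -> list bool -> R) (G : list bool -> R) : R :=
  match n with
  | O => G h
  | S n' => f t h + mu t (p h) * tree_expect p mu (S t) (true :: h) n' f G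
            + (1 - mu t (p h)) * tree_expect p mu (S t) (false :: h) n' f G
  end.

Section TreeExpect.
Variable p : det_policy.

Lemma exp_reward_tree_expect (mu : nat -> nat -> R) (n t : nat) (h : list bool) :
  exp_reward p mu t h n = tree_expect p mu t h n (fun s h => mu s (p h)) (fun _ => 0).
Proof.
  revert t h; induction n as [|n IH]; intros t h; simpl; [reflexivity|].
  rewrite !IH. reflexivity.
Qed.

Lemma tree_expect_lin mu n t h (a b : R) f1 f2 G1 G2 :
  tree_expect p mu t h n (fun s h => a * f1 s h + b * f2 s h) (fun h => a * G1 h + b * G2 h)
  = a * tree_expect p mu t h n f1 G1 + b * tree_expect p mu t h n f2 G2.
Proof.
  revert t h; induction n as [|n IH]; intros t h; simpl; [reflexivity|].
  rewrite !IH. ring.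
Qed.

Lemma tree_expect_ext mu1 mu2 n t h f1 f2 G1 G2 :
  (forall s k, (t <= s < t + n)%nat -> mu1 s k = mu2 s k) ->
  (forall s h, (t <= s < t + n)%nat -> f1 s h = f2 s h) ->
  (forall h, G1 h = G2 h) ->
  tree_expect p mu1 t h n f1 G1 = tree_expect p mu2 t h n f2 G2.
Proof.
  revert t h; induction n as [|n IH]; intros t h Hmu Hf HG; simpl; [auto|].
  rewrite (IH (S t) (true :: h)), (IH (S t) (false :: h));
    try (intros; first [apply Hmu | apply Hf]; lia); auto.
  rewrite Hmu, Hf by lia. reflexivity.
Qed.

Lemma tree_expect_shift mu n a t h f G :
  tree_expect p mu (a + t) h n f G
  = tree_expect p (fun s => mu (a + s)%nat) t h n (fun s => f (a + s)%nat) G.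
Proof.
  revert t h; induction n as [|n IH]; intros t h; simpl; [reflexivity|].
  replace (S (a + t)) with (a + S t)%nat by lia. rewrite !IH. reflexivity.
Qed.

Lemma tree_expect_split mu n1 n2 t h f G :
  tree_expect p mu t h (n1 + n2) f G
  = tree_expect p mu t h n1 f (fun h' => tree_expect p mu (t + n1) h' n2 f G).
Proof.
  revert t h; induction n1 as [|n1 IH]; intros t h; simpl.
  - rewrite Nat.add_0_r. reflexivity.
  - rewrite !IH. replace (S t + n1)%nat with (t + S n1)%nat by lia. reflexivity.
Qed.

Lemma tree_expect_const mu n t h (c : R) :
  tree_expect p mu t h n (fun _ _ => 0) (fun _ => c) = c.
Proof.
  revert t h; induction n as [|n IH]; intros t h; simpl; [reflexivity|].
  rewrite !IH. ring.
Qed.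

Lemma tree_expect_time mu n t h (c : nat -> R) :
  tree_expect p mu t h n (fun s _ => c s) (fun _ => 0) = sumR (fun i => c (t + i)%nat) n.
Proof.
  revert t h; induction n as [|n IH]; intros t h; simpl; [reflexivity|].
  rewrite !IH.
  rewrite <- (sumR_shift (fun i => c (t + i)%nat) n), Nat.add_0_r.
  rewrite (sumR_ext (fun i => c (S t + i)%nat) (fun i => c (t + S i)%nat))
    by (intros; f_equal; lia).
  ring.
Qed.

Lemma tree_expect_sum mu n t h (K : nat) (F : nat -> nat -> list bool -> R) :
  tree_expect p mu t h n (fun s h => sumR (fun j => F j s h) K) (fun _ => 0)
  = sumR (fun j => tree_expect p mu t h n (F j) (fun _ => 0)) K.
Proof.
  induction K as [|K IH]; simpl.
  - apply (tree_expect_const mu n t h 0).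
  - rewrite <- IH, <- (Rmult_1_l (tree_expect p mu t h n (fun s h => sumR _ K) _)),
      <- (Rmult_1_l (tree_expect p mu t h n (F K) _)), <- tree_expect_lin.
    apply tree_expect_ext; intros; auto; ring.
Qed.

Section Probabilities.
Variable mu : nat -> nat -> R.
Hypothesis mu_01 : forall s k, 0 <= mu s k <= 1.

Lemma tree_expect_mono n t h f1 f2 G1 G2 :
  (forall s h, f1 s h <= f2 s h) -> (forall h, G1 h <= G2 h) ->
  tree_expect p mu t h n f1 G1 <= tree_expect p mu t h n f2 G2.
Proof.
  revert t h; induction n as [|n IH]; intros t h Hf HG; simpl; [auto|].
  pose proof (IH (S t) (true :: h) Hf HG). pose proof (IH (S t) (false :: h) Hf HG).
  pose proof (mu_01 t (p h)). pose proof (Hf t h).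
  apply Rplus_le_compat; [apply Rplus_le_compat|]; auto; apply Rmult_le_compat_l; lra.
Qed.

Lemma tree_expect_nonneg n t h f G :
  (forall s h, 0 <= f s h) -> (forall h, 0 <= G h) -> 0 <= tree_expect p mu t h n f G.
Proof.
  intros Hf HG. rewrite <- (tree_expect_const mu n t h 0). apply tree_expect_mono; auto.
Qed.

Lemma tree_expect_le_length n1 n t h f :
  (n1 <= n)%nat -> (forall s h, 0 <= f s h) ->
  tree_expect p mu t h n1 f (fun _ => 0) <= tree_expect p mu t h n f (fun _ => 0).
Proof.
  intros Hn Hf. replace n with (n1 + (n - n1))%nat by lia. rewrite tree_expect_split.
  apply tree_expect_mono; intros; [lra|]. apply tree_expect_nonneg; auto. intros; lra.
Qed.

End Probabilities.
End TreeExpect.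

Definition cons_label (j : nat) (g : nat -> nat) : nat -> nat :=
  fun b => match b with O => j | S b' => g b' end.

(* Average of [F g] over the labelings [g] whose first [r] values are drawn
   independently and uniformly from arms [0 .. K-1] (the later values are 0). *)
Fixpoint avg_labels (K r : nat) (F : (nat -> nat) -> R) : R :=
  match r with
  | O => F (fun _ => O)
  | S r' => / INR K * sumR (fun j => avg_labels K r' (fun g => F (cons_label j g))) K
  end.

Lemma avg_labels_ext K r F1 F2 :
  (forall g, F1 g = F2 g) -> avg_labels K r F1 = avg_labels K r F2.
Proof.
  revert F1 F2; induction r as [|r IH]; intros F1 F2 HF; simpl; [auto|].
  f_equal. apply sumR_ext. intros. apply IH. auto.
Qed.

Lemma avg_labels_lin K r (a b : R) F1 F2 :
  avg_labels K r (fun g => a * F1 g + b * F2 g) = a * avg_labels K r F1 + b * avg_labels K r F2.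
Proof.
  revert F1 F2; induction r as [|r IH]; intros F1 F2; simpl; [reflexivity|].
  rewrite (sumR_ext _ (fun j => a * avg_labels K r (fun g => F1 (cons_label j g))
                                + b * avg_labels K r (fun g => F2 (cons_label j g))))
    by (intros; apply IH).
  rewrite sumR_lin. ring.
Qed.

Lemma avg_labels_const K r (c : R) : (0 < K)%nat -> avg_labels K r (fun _ => c) = c.
Proof.
  intros HK. induction r as [|r IH]; simpl; [reflexivity|].
  rewrite (sumR_ext _ (fun _ => c)) by (intros; apply IH). rewrite sumR_const.
  field. apply not_0_INR. lia.
Qed.

Lemma avg_labels_wsum K r (m : nat) (w : nat -> R) (F : nat -> (nat -> nat) -> R) :
  avg_labels K r (fun g => sumR (fun i => w i * F i g) m)
  = sumR (fun i => w i * avg_labels K r (F i)) m.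
Proof.
  induction m as [|m IH]; simpl.
  - rewrite (avg_labels_ext K r _ (fun _ => 0 * 0 + 0 * 0)) by (intros; ring).
    rewrite avg_labels_lin. ring.
  - rewrite <- IH, <- (Rmult_1_l (avg_labels K r (fun g => sumR _ m))), <- avg_labels_lin.
    apply avg_labels_ext. intros. ring.
Qed.

Lemma avg_labels_tree_expect K r p mu n t h (H : (nat -> nat) -> list bool -> R) :
  tree_expect p mu t h n (fun _ _ => 0) (fun h' => avg_labels K r (fun g => H g h'))
  = avg_labels K r (fun g => tree_expect p mu t h n (fun _ _ => 0) (H g)).
Proof.
  revert t h; induction n as [|n IH]; intros t h; simpl; [reflexivity|].
  rewrite !IH, Rplus_0_l, <- avg_labels_lin.
  apply avg_labels_ext. intros. ring.
Qed.

Lemma exists_argmax (a : nat -> R) (K : nat) :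
  (0 < K)%nat -> exists j, (j < K)%nat /\ forall i, (i < K)%nat -> a i <= a j.
Proof.
  induction K as [|[|K] IH]; intros HK; [lia| |].
  - exists O. split; [lia|]. intros i Hi. replace i with O by lia. lra.
  - destruct (IH ltac:(lia)) as [j [Hj Hmax]].
    destruct (Rle_dec (a j) (a (S K))).
    + exists (S K). split; [lia|]. intros i Hi.
      destruct (Nat.eq_dec i (S K)) as [->|]; [lra|]. pose proof (Hmax i ltac:(lia)). lra.
    + exists j. split; [lia|]. intros i Hi.
      destruct (Nat.eq_dec i (S K)) as [->|]; [lra|]. apply Hmax. lia.
Qed.

Lemma avg_le_some (a : nat -> R) (K : nat) :
  (0 < K)%nat -> exists j, (j < K)%nat /\ / INR K * sumR a K <= a j.
Proof.
  intros HK. destruct (exists_argmax a K HK) as [j [Hj Hmax]]. exists j. split; auto.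
  assert (sumR a K <= INR K * a j) by (rewrite <- sumR_const; apply sumR_le; auto).
  assert (0 < INR K) by (apply lt_0_INR; exact HK).
  apply (Rmult_le_reg_l (INR K)); [lra|]. field_simplify; lra.
Qed.

Lemma avg_labels_le_some K r F :
  (0 < K)%nat -> exists g, (forall b, (g b < K)%nat) /\ avg_labels K r F <= F g.
Proof.
  revert F; induction r as [|r IH]; intros F HK; simpl.
  - exists (fun _ => O). split; [intros; lia|lra].
  - destruct (avg_le_some (fun j => avg_labels K r (fun g => F (cons_label j g))) K HK)
      as [j [Hj Hle]].
    destruct (IH (fun g => F (cons_label j g)) HK) as [g [Hg Hle']].
    exists (cons_label j g). split; [intros [|b]; simpl; auto|lra].
Qed.

Section SingleBatch.
Variable p : det_policy.
Variables j m : nat.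

Definition env_single (e : R) : nat -> nat -> R :=
  fun _ k => 1/2 + (if Nat.eqb k j then e else 0).

Definition pulls : nat -> list bool -> R := fun _ h => if Nat.eqb (p h) j then 1 else 0.
Definition mispulls : nat -> list bool -> R := fun _ h => if Nat.eqb (p h) j then 0 else 1.

(* Probability that arm [j], having been pulled [c] times, reaches [m] pulls
   within [n] more epochs, when arm [j] is Bernoulli([q]) and all others are
   Bernoulli(1/2). *)
Fixpoint prob_pulls_ge (q : R) (h : list bool) (n c : nat) {struct n} : R :=
  if Nat.leb m c then 1 else
  match n with
  | O => 0
  | S n' =>
      if Nat.eqb (p h) j
      then q * prob_pulls_ge q (true :: h) n' (S c)
           + (1 - q) * prob_pulls_ge q (false :: h) n' (S c)
      else 1/2 * prob_pulls_ge q (true :: h) n' c + 1/2 * prob_pulls_ge q (false :: h) n' c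
  end.

(* Second moment, under the all-1/2 environment, of the likelihood ratio of
   [env_single e] against it, stopped at the [m]-th pull of arm [j]: each pull
   of [j] multiplies the ratio by [1 + 2e] or [1 - 2e]. *)
Fixpoint lr_moment2 (e : R) (h : list bool) (n c : nat) {struct n} : R :=
  if Nat.leb m c then 1 else
  match n with
  | O => 1
  | S n' =>
      if Nat.eqb (p h) j
      then (1 + 2*e)^2 / 2 * lr_moment2 e (true :: h) n' (S c)
           + (1 - 2*e)^2 / 2 * lr_moment2 e (false :: h) n' (S c)
      else 1/2 * lr_moment2 e (true :: h) n' c + 1/2 * lr_moment2 e (false :: h) n' c
  end.

Lemma env_single_01 (e : R) : 0 <= e <= 1/2 -> forall s k, 0 <= env_single e s k <= 1.
Proof. intros He s k. unfold env_single. destruct (Nat.eqb k j); lra. Qed.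

Lemma prob_pulls_ge_01 q n h c : 0 <= q <= 1 -> 0 <= prob_pulls_ge q h n c <= 1.
Proof.
  intros Hq. revert h c; induction n as [|n IH]; intros h c; simpl;
    destruct (Nat.leb m c); try lra.
  destruct (Nat.eqb (p h) j).
  - pose proof (IH (true :: h) (S c)). pose proof (IH (false :: h) (S c)). nra.
  - pose proof (IH (true :: h) c). pose proof (IH (false :: h) c). nra.
Qed.

Lemma prob_pulls_ge_markov n h c t :
  INR m * prob_pulls_ge (1/2) h n c
  <= INR c + tree_expect p (fun _ _ => 1/2) t h n pulls (fun _ => 0).
Proof.
  assert (Hhalf : forall s k, 0 <= (fun _ _ : nat => 1/2) s k <= 1) by (intros; lra).
  assert (Hpulls : forall s h, 0 <= pulls s h)
    by (intros; unfold pulls; destruct (Nat.eqb _ _); lra).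
  revert h c t; induction n as [|n IH]; intros h c t; simpl.
  - destruct (Nat.leb_spec m c) as [Hmc|]; [apply le_INR in Hmc; lra|].
    pose proof (pos_INR c). lra.
  - unfold pulls at 1.
    destruct (Nat.leb_spec m c) as [Hmc|Hmc].
    + apply le_INR in Hmc.
      assert (Hzero : forall h, 0 <= (fun _ : list bool => 0) h) by (intros; lra).
      pose proof (tree_expect_nonneg p _ Hhalf n (S t) (true :: h) pulls _ Hpulls Hzero).
      pose proof (tree_expect_nonneg p _ Hhalf n (S t) (false :: h) pulls _ Hpulls Hzero).
      destruct (Nat.eqb _ _); lra.
    + pose proof (IH (true :: h) (S c) (S t)). pose proof (IH (false :: h) (S c) (S t)).
      pose proof (IH (true :: h) c (S t)). pose proof (IH (false :: h) c (S t)).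
      rewrite S_INR in *. destruct (Nat.eqb (p h) j); lra.
Qed.

(* Pointwise [x <= 5/4 + (x - 1)^2] at [x = a * ratio] on the event, integrated
   under the all-1/2 environment. *)
Lemma prob_pulls_ge_change_of_measure e n h c (a : R) :
  a * prob_pulls_ge (1/2 + e) h n c
  <= 5/4 * prob_pulls_ge (1/2) h n c + (a^2 * lr_moment2 e h n c - 2 * a + 1).
Proof.
  revert h c a; induction n as [|n IH]; intros h c a; simpl;
    pose proof (pow2_ge_0 (a - 3/2)).
  - pose proof (pow2_ge_0 (a - 1)). destruct (Nat.leb m c); nra.
  - destruct (Nat.leb m c); [nra|].
    destruct (Nat.eqb (p h) j).
    + pose proof (IH (true :: h) (S c) (a * (1 + 2*e))).
      pose proof (IH (false :: h) (S c) (a * (1 - 2*e))). lra.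
    + pose proof (IH (true :: h) c a). pose proof (IH (false :: h) c a). lra.
Qed.

Lemma lr_moment2_le e n h c : lr_moment2 e h n c <= (1 + 4 * e^2)^(m - c).
Proof.
  assert (Hge1 : forall k, 1 <= (1 + 4 * e^2)^k) by (intros; apply pow_R1_Rle; nra).
  revert h c; induction n as [|n IH]; intros h c; cbn [lr_moment2].
  - destruct (Nat.leb m c); apply Hge1.
  - destruct (Nat.leb_spec m c); [apply Hge1|].
    destruct (Nat.eqb (p h) j).
    + replace (m - c)%nat with (S (m - S c)) by lia. rewrite <- (tech_pow_Rmult (1 + 4 * e^2)).
      pose proof (IH (true :: h) (S c)). pose proof (IH (false :: h) (S c)).
      pose proof (pow2_ge_0 (1 + 2*e)). pose proof (pow2_ge_0 (1 - 2*e)).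
      set (B := (1 + 4 * e^2)^(m - S c)) in *.
      apply Rle_trans with ((1 + 2*e)^2 / 2 * B + (1 - 2*e)^2 / 2 * B); [|apply Req_le; field].
      apply Rplus_le_compat; apply Rmult_le_compat_l; lra.
    + pose proof (IH (true :: h) c). pose proof (IH (false :: h) c). lra.
Qed.

(* While arm [j] has fewer than [m] pulls, at most [m - c - 1] of the remaining
   [n] pulls can hit it. *)
Lemma mispulls_ge_prob e : 0 <= e <= 1/2 -> forall n h c t,
  (INR n - INR m + 1 + INR c) * (1 - prob_pulls_ge (1/2 + e) h n c)
  <= tree_expect p (env_single e) t h n mispulls (fun _ => 0).
Proof.
  intros He. induction n as [|n IH]; intros h c t; cbn [prob_pulls_ge tree_expect].
  - destruct (Nat.leb_spec m c); [lra|].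
    assert (INR (S c) <= INR m) by (apply le_INR; lia). rewrite S_INR in *. simpl. lra.
  - destruct (Nat.leb_spec m c).
    + assert (0 <= tree_expect p (env_single e) t h (S n) mispulls (fun _ => 0)).
      { apply tree_expect_nonneg; [apply env_single_01; auto| |intros; lra].
        intros. unfold mispulls. destruct (Nat.eqb _ _); lra. }
      simpl in *. lra.
    + rewrite S_INR.
      change (env_single e t (p h)) with (1/2 + (if Nat.eqb (p h) j then e else 0)).
      change (mispulls t h) with (if Nat.eqb (p h) j then 0 else 1).
      destruct (Nat.eqb (p h) j).
      * pose proof (IH (true :: h) (S c) (S t)) as Hwin.
        pose proof (IH (false :: h) (S c) (S t)) as Hlose. rewrite S_INR in *.
        assert (0 <= 1/2 + e) as Hq by lra. assert (0 <= 1 - (1/2 + e)) as Hq' by lra.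
        pose proof (Rmult_le_compat_l _ _ _ Hq Hwin).
        pose proof (Rmult_le_compat_l _ _ _ Hq' Hlose). lra.
      * pose proof (IH (true :: h) c (S t)). pose proof (IH (false :: h) c (S t)).
        pose proof (prob_pulls_ge_01 (1/2 + e) n (true :: h) c ltac:(lra)).
        pose proof (prob_pulls_ge_01 (1/2 + e) n (false :: h) c ltac:(lra)). lra.
Qed.

Lemma mispulls_ge_moment e D h :
  0 <= e <= 1/2 -> 0 <= INR D - INR m + 1 ->
  (INR D - INR m + 1) * (2 - (1 + 4 * e^2)^m - 5/4 * prob_pulls_ge (1/2) h D 0)
  <= tree_expect p (env_single e) 0 h D mispulls (fun _ => 0).
Proof.
  intros He HL.
  pose proof (mispulls_ge_prob e He D h 0 0) as Hmis. simpl INR in Hmis at 3.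
  pose proof (prob_pulls_ge_change_of_measure e D h 0 1) as Hchange.
  pose proof (lr_moment2_le e D h 0) as Hlr. rewrite Nat.sub_0_r in Hlr.
  eapply Rle_trans; [|exact Hmis]. rewrite Rplus_0_r.
  apply Rmult_le_compat_l; lra.
Qed.

End SingleBatch.

Lemma sum_expected_pulls (p : det_policy) (K n : nat) (h : list bool) :
  (forall h, (p h < K)%nat) ->
  sumR (fun j => tree_expect p (fun _ _ => 1/2) 0 h n (pulls p j) (fun _ => 0)) K = INR n.
Proof.
  intros Hp. rewrite <- tree_expect_sum.
  rewrite (tree_expect_ext p _ (fun _ _ => 1/2) n 0 h _ (fun _ _ => 1) _ (fun _ => 0));
    [| auto | intros; apply sumR_indicator; auto | auto].
  rewrite (tree_expect_time p _ n 0 h (fun _ => 1)), sumR_const. ring.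
Qed.

Lemma sum_prob_pulls_ge_le (p : det_policy) (K m n : nat) (h : list bool) :
  (forall h, (p h < K)%nat) ->
  INR m * sumR (fun j => prob_pulls_ge p j m (1/2) h n 0) K <= INR n.
Proof.
  intros Hp. rewrite <- sumR_scal, <- (sum_expected_pulls p K n h Hp).
  apply sumR_le. intros j _.
  pose proof (prob_pulls_ge_markov p j m n h 0 0). simpl INR in *. lra.
Qed.

Lemma pow_mul_one_sub_le (x : R) (m : nat) : 0 <= x -> (1 + x)^m * (1 - INR m * x) <= 1.
Proof.
  intros Hx. induction m as [|m IH]; [simpl; lra|].
  rewrite S_INR, <- tech_pow_Rmult.
  assert (0 <= (1 + x)^m) by (apply pow_le; lra).
  assert (0 <= (1 + x)^m * (INR m + 1) * x * x).
  { repeat apply Rmult_le_pos; auto. pose proof (pos_INR m). lra. }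
  nra.
Qed.

Lemma pull_threshold_bounds (K D : nat) : (2 <= K)%nat ->
  3 * INR D <= 2 * INR K * INR (3 * D / (2 * K) + 1)
  /\ INR D <= 4 * (INR D - INR (3 * D / (2 * K) + 1) + 1).
Proof.
  intros HK. set (q := (3 * D / (2 * K))%nat).
  assert (Hq_le : (2 * K * q <= 3 * D)%nat) by apply Nat.Div0.mul_div_le.
  assert (Hq_gt : (3 * D < 2 * K * (q + 1))%nat).
  { pose proof (Nat.div_mod (3 * D) (2 * K) ltac:(lia)).
    pose proof (Nat.mod_upper_bound (3 * D) (2 * K) ltac:(lia)). unfold q in *. lia. }
  assert (H4q : (4 * q <= 3 * D)%nat) by nia.
  apply lt_INR in Hq_gt. apply le_INR in H4q.
  rewrite !mult_INR, !plus_INR in *. simpl INR in *. lra.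
Qed.

(* The threshold is [m = floor(3D/2K) + 1]: summing the Markov bounds over arms,
   arm [j] reaches [m] pulls with probability at most 2/3 on average under the
   null, while [52 e^2 m <= 1] keeps the stopped likelihood ratio's second moment
   below 13/12. *)
Lemma sum_mispulls_single_ge (K D : nat) (e : R) (p : det_policy) (h : list bool) :
  (2 <= K)%nat -> (forall h, (p h < K)%nat) -> 0 <= e <= 1/2 ->
  52 * e^2 * INR (3 * D / (2 * K) + 1) <= 1 ->
  INR K * (INR D / 48)
  <= sumR (fun j => tree_expect p (env_single j e) 0 h D (mispulls p j) (fun _ => 0)) K.
Proof.
  intros HK Hp He Hsmall.
  destruct (pull_threshold_bounds K D HK) as [Hm HL].
  set (m := (3 * D / (2 * K) + 1)%nat) in *.
  set (L := INR D - INR m + 1) in *.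
  assert (HKpos : 0 < INR K) by (apply lt_0_INR; lia).
  assert (Hmpos : 0 < INR m) by (apply lt_0_INR; unfold m; lia).
  set (P := (1 + 4 * e^2)^m).
  assert (HP : P <= 13/12).
  { pose proof (pow_mul_one_sub_le (4 * e^2) m ltac:(nra)) as Hbern.
    assert (0 <= P) by (apply pow_le; nra). fold P in Hbern. nra. }
  set (P0 := fun j => prob_pulls_ge p j m (1/2) h D 0).
  assert (HP0 : sumR P0 K <= 2/3 * INR K).
  { pose proof (sum_prob_pulls_ge_le p K m D h Hp).
    apply (Rmult_le_reg_l (INR m)); [lra|]. unfold P0. lra. }
  assert (Hsum : sumR (fun j => L * (2 - P) * 1 + (- 5/4 * L) * P0 j) K
                 <= sumR (fun j => tree_expect p (env_single j e) 0 h D (mispulls p j)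
                                     (fun _ => 0)) K).
  { apply sumR_le. intros j _. unfold P0.
    assert (HL0 : 0 <= L) by (pose proof (pos_INR D); lra).
    pose proof (mispulls_ge_moment p j m e D h He HL0) as Harm.
    fold P L in Harm. lra. }
  rewrite sumR_lin, sumR_const in Hsum.
  assert (L * INR K * P <= L * INR K * (13/12))
    by (apply Rmult_le_compat_l; [apply Rmult_le_pos|]; pose proof (pos_INR D); lra).
  assert (L * sumR P0 K <= L * (2/3 * INR K))
    by (apply Rmult_le_compat_l; pose proof (pos_INR D); lra).
  assert (INR D * INR K <= 4 * L * INR K) by (apply Rmult_le_compat_r; lra).
  lra.
Qed.

Definition env_batched (D : nat) (e : R) (g : nat -> nat) : nat -> nat -> R :=
  fun s => env_single (g (s / D)%nat) e s.

Definition mispulls_batched (D : nat) (g : nat -> nat) (p : det_policy) : nat -> list bool -> R :=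
  fun s => mispulls p (g (s / D)%nat) s.

Lemma env_batched_01 D e g : 0 <= e <= 1/2 -> forall s k, 0 <= env_batched D e g s k <= 1.
Proof. intros He s k. apply env_single_01. exact He. Qed.

Lemma div_add_diag_l (D s : nat) : (1 <= D)%nat -> ((D + s) / D = S (s / D))%nat.
Proof.
  intros HD. replace (D + s)%nat with (1 * D + s)%nat by lia.
  rewrite Nat.div_add_l by lia. reflexivity.
Qed.

Lemma mispulls_batched_cons D e p h r j g : (1 <= D)%nat ->
  tree_expect p (env_batched D e (cons_label j g)) 0 h (S r * D)
    (mispulls_batched D (cons_label j g) p) (fun _ => 0)
  = tree_expect p (env_single j e) 0 h D (mispulls p j) (fun _ => 0)
    + tree_expect p (env_single j e) 0 h D (fun _ _ => 0)
        (fun h' => tree_expect p (env_batched D e g) 0 h' (r * D)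
                     (mispulls_batched D g p) (fun _ => 0)).
Proof.
  intros HD. replace (S r * D)%nat with (D + r * D)%nat by lia.
  rewrite tree_expect_split,
    <- (Rmult_1_l (tree_expect p (env_single j e) 0 h D (mispulls p j) _)),
    <- (Rmult_1_l (tree_expect p (env_single j e) 0 h D (fun _ _ => 0) _)),
    <- tree_expect_lin.
  apply tree_expect_ext.
  - intros s k Hs. unfold env_batched. rewrite Nat.div_small by lia. reflexivity.
  - intros s h' Hs. unfold mispulls_batched. rewrite Nat.div_small by lia. simpl. ring.
  - intros h'. rewrite Rmult_0_r, Rplus_0_l, Rmult_1_l.
    rewrite <- (Nat.add_0_r (0 + D)), Nat.add_0_l, tree_expect_shift.
    apply tree_expect_ext; intros; [| |reflexivity];
      unfold env_batched, mispulls_batched; rewrite div_add_diag_l by exact HD; reflexivity.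
Qed.

Lemma avg_mispulls_batched_cons K D e p h r j : (0 < K)%nat -> (1 <= D)%nat ->
  avg_labels K r (fun g => tree_expect p (env_batched D e (cons_label j g)) 0 h (S r * D)
                             (mispulls_batched D (cons_label j g) p) (fun _ => 0))
  = tree_expect p (env_single j e) 0 h D (mispulls p j) (fun _ => 0)
    + tree_expect p (env_single j e) 0 h D (fun _ _ => 0)
        (fun h' => avg_labels K r (fun g => tree_expect p (env_batched D e g) 0 h' (r * D)
                                              (mispulls_batched D g p) (fun _ => 0))).
Proof.
  intros HK HD.
  rewrite (avg_labels_ext _ _ _ _ (fun g => mispulls_batched_cons D e p h r j g HD)).
  set (A := tree_expect p (env_single j e) 0 h D (mispulls p j) (fun _ => 0)).
  rewrite (avg_labels_ext K r _ (fun g => 1 * A + 1 * tree_expect p (env_single j e) 0 h D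
      (fun _ _ => 0) (fun h' => tree_expect p (env_batched D e g) 0 h' (r * D)
                                  (mispulls_batched D g p) (fun _ => 0))))
    by (intros; ring).
  rewrite avg_labels_lin, avg_labels_const, avg_labels_tree_expect by exact HK. ring.
Qed.

Section Batches.
Variables (K D : nat) (e : R).
Hypothesis HK : (2 <= K)%nat.
Hypothesis HD : (1 <= D)%nat.
Hypothesis He : 0 <= e <= 1/2.
Hypothesis Hsmall : 52 * e^2 * INR (3 * D / (2 * K) + 1) <= 1.

Lemma avg_mispulls_batched_ge (p : det_policy) (r : nat) (h : list bool) :
  (forall h, (p h < K)%nat) ->
  INR r * (INR D / 48)
  <= avg_labels K r (fun g => tree_expect p (env_batched D e g) 0 h (r * D)
                                (mispulls_batched D g p) (fun _ => 0)).
Proof.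
  intros Hp. revert h; induction r as [|r IH]; intros h; [simpl; lra|].
  cbn [avg_labels].
  set (A := fun j => tree_expect p (env_single j e) 0 h D (mispulls p j) (fun _ => 0)).
  assert (Harm : forall j, (j < K)%nat ->
    1 * A j + (INR r * (INR D / 48)) * 1
    <= avg_labels K r (fun g => tree_expect p (env_batched D e (cons_label j g)) 0 h (S r * D)
                                  (mispulls_batched D (cons_label j g) p) (fun _ => 0))).
  { intros j Hj. rewrite Rmult_1_l, Rmult_1_r, avg_mispulls_batched_cons by (exact HD || lia).
    rewrite <- (tree_expect_const p (env_single j e) D 0 h (INR r * (INR D / 48))) at 1.
    apply Rplus_le_compat; [unfold A; lra|].
    apply tree_expect_mono; [apply env_single_01, He|intros; lra|intros; apply IH]. }
  pose proof (sumR_le _ _ K Harm) as Hsum. rewrite sumR_lin, sumR_const in Hsum.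
  pose proof (sum_mispulls_single_ge K D e p h HK Hp He Hsmall) as Hsingle. fold A in Hsingle.
  rewrite S_INR. apply Rle_inv_mult_l; [apply lt_0_INR; lia|lra].
Qed.

Lemma exists_labeling_mispulls_ge (T B m : nat) (w : nat -> R) (ps : nat -> det_policy) :
  is_randomized_policy K m w ps -> (B * D <= T)%nat ->
  exists g, (forall b, (g b < K)%nat) /\
    INR B * (INR D / 48)
    <= sumR (fun i => w i * tree_expect (ps i) (env_batched D e g) 0 nil T
                              (mispulls_batched D g (ps i)) (fun _ => 0)) m.
Proof.
  intros [Hw [Hw1 Hps]] HBD.
  set (F := fun i g => tree_expect (ps i) (env_batched D e g) 0 nil (B * D)
                         (mispulls_batched D g (ps i)) (fun _ => 0)).
  destruct (avg_labels_le_some K B (fun g => sumR (fun i => w i * F i g) m) ltac:(lia))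
    as [g [Hg Hle]].
  exists g. split; [exact Hg|].
  assert (Havg : INR B * (INR D / 48) <= avg_labels K B (fun g => sumR (fun i => w i * F i g) m)).
  { rewrite avg_labels_wsum, <- (Rmult_1_r (INR B * _)), <- Hw1, <- sumR_scal.
    apply sumR_le. intros i Hi. rewrite Rmult_comm.
    apply Rmult_le_compat_l; [apply Hw; auto|].
    apply avg_mispulls_batched_ge. intros; apply Hps; auto. }
  eapply Rle_trans; [exact Havg|]. eapply Rle_trans; [exact Hle|].
  apply sumR_le. intros i Hi. apply Rmult_le_compat_l; [apply Hw; auto|].
  apply tree_expect_le_length; [apply env_batched_01, He|exact HBD|].
  intros. unfold mispulls_batched, mispulls. destruct (Nat.eqb _ _); lra.
Qed.

End Batches.

Lemma div_succ_step (D n : nat) : (1 <= D)%nat ->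
  (S n / D = n / D + (if Nat.eqb (S n mod D) 0 then 1 else 0))%nat.
Proof.
  intros HD. pose proof (Nat.div_mod_eq n D). pose proof (Nat.mod_upper_bound n D ltac:(lia)).
  set (q := (n / D)%nat) in *. set (r := (n mod D)%nat) in *.
  destruct (Nat.eq_dec (S r) D).
  - rewrite <- (Nat.div_unique (S n) D (S q) 0), <- (Nat.mod_unique (S n) D (S q) 0)
      by (lia || nia). simpl. lia.
  - rewrite <- (Nat.div_unique (S n) D q (S r)), <- (Nat.mod_unique (S n) D q (S r))
      by (lia || nia). simpl. lia.
Qed.

Lemma count_batch_boundaries (D n : nat) : (1 <= D)%nat ->
  sumR (fun t => if Nat.eqb (S t mod D) 0 then 1 else 0) n = INR (n / D).
Proof.
  intros HD. induction n as [|n IH]; [simpl; rewrite Nat.Div0.div_0_l; reflexivity|].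
  simpl sumR. rewrite IH, (div_succ_step D n HD), plus_INR.
  destruct (Nat.eqb _ _); simpl; ring.
Qed.

Lemma env_batched_step_le K D e g t : (1 <= K)%nat -> (1 <= D)%nat -> 0 <= e ->
  maxK (fun k => Rabs (env_batched D e g t k - env_batched D e g (S t) k)) K
  <= e * (if Nat.eqb (S t mod D) 0 then 1 else 0).
Proof.
  intros HK HD He. apply maxK_le; [exact HK|]. intros k _.
  unfold env_batched, env_single. rewrite (div_succ_step D t HD).
  destruct (Nat.eqb (S t mod D) 0).
  - destruct (Nat.eqb k (g (t / D)%nat)), (Nat.eqb k (g (t / D + 1)%nat)); apply Rabs_le; lra.
  - rewrite Nat.add_0_r, Rminus_diag, Rabs_R0. lra.
Qed.

Lemma env_batched_in_V K T VT D e g : (1 <= K)%nat -> (1 <= D)%nat -> 0 <= e <= 1/2 ->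
  e * INR ((T - 1) / D) <= VT -> in_V K T VT (env_batched D e g).
Proof.
  intros HK HD He Hvar. split.
  - intros. apply env_batched_01. exact He.
  - eapply Rle_trans; [|exact Hvar].
    rewrite <- count_batch_boundaries, <- sumR_scal by exact HD.
    apply sumR_le. intros. apply env_batched_step_le; lra || assumption.
Qed.

Lemma maxK_env_batched K D e g s : (g (s / D) < K)%nat -> 0 <= e ->
  maxK (env_batched D e g s) K = 1/2 + e.
Proof.
  intros Hg He. apply Rle_antisym.
  - apply maxK_le; [lia|]. intros. unfold env_batched, env_single. destruct (Nat.eqb _ _); lra.
  - pose proof (maxK_ge (env_batched D e g s) K _ Hg) as Hbest.
    unfold env_batched at 1, env_single at 1 in Hbest.
    rewrite Nat.eqb_refl in Hbest. exact Hbest.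
Qed.

Lemma exp_reward_env_batched p D e g T :
  exp_reward p (env_batched D e g) 0 nil T
  = INR T * (1/2 + e)
    - e * tree_expect p (env_batched D e g) 0 nil T (mispulls_batched D g p) (fun _ => 0).
Proof.
  rewrite exp_reward_tree_expect.
  rewrite (tree_expect_ext p _ (env_batched D e g) T 0 nil _
             (fun s h => 1 * (1/2 + e) + (- e) * mispulls_batched D g p s h) _
             (fun _ => 1 * 0 + (- e) * 0));
    [| auto | | intros; ring].
  - rewrite tree_expect_lin, (tree_expect_time p _ T 0 nil (fun _ => 1/2 + e)), sumR_const. ring.
  - intros s h _. unfold env_batched, env_single, mispulls_batched, mispulls.
    destruct (Nat.eqb (p h) (g (s / D)%nat)); ring.
Qed.

Lemma regret_env_batched K T m w ps D e g :
  (forall b, (g b < K)%nat) -> 0 <= e -> sumR w m = 1 ->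
  regret K T m w ps (env_batched D e g)
  = e * sumR (fun i => w i * tree_expect (ps i) (env_batched D e g) 0 nil T
                                (mispulls_batched D g (ps i)) (fun _ => 0)) m.
Proof.
  intros Hg He Hw1. unfold regret.
  rewrite (sumR_ext _ (fun _ => 1/2 + e)) by (intros; apply maxK_env_batched; auto).
  rewrite sumR_const.
  rewrite (sumR_ext _ (fun i => (INR T * (1/2 + e)) * w i
                                + (- e) * (w i * tree_expect (ps i) (env_batched D e g) 0 nil T
                                                   (mispulls_batched D g (ps i)) (fun _ => 0))))
    by (intros; rewrite exp_reward_env_batched; ring).
  rewrite sumR_lin, Hw1. ring.
Qed.

Definition valid_batching (K T : nat) (VT : R) (D : nat) (e : R) : Prop :=
  (1 <= D <= T)%nat /\ 0 <= e <= 1/2 /\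
  52 * e^2 * INR (3 * D / (2 * K) + 1) <= 1 /\ e * INR ((T - 1) / D) <= VT.

Lemma regret_ge_of_batching K T VT D e m w ps M :
  (2 <= K)%nat -> valid_batching K T VT D e -> is_randomized_policy K m w ps ->
  (forall mu, in_V K T VT mu -> regret K T m w ps mu <= M) ->
  e * INR T / 96 <= M.
Proof.
  intros HK (HD & He & Hsmall & Hvar) Hpol HM.
  set (B := (T / D)%nat).
  assert (HBD : (B * D <= T)%nat) by (unfold B; rewrite Nat.mul_comm; apply Nat.Div0.mul_div_le).
  assert (HT : INR T <= 2 * (INR B * INR D)).
  { rewrite <- mult_INR. replace 2 with (INR 2) by reflexivity. rewrite <- mult_INR.
    apply le_INR. pose proof (Nat.div_mod_eq T D). pose proof (Nat.mod_upper_bound T D ltac:(lia)).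
    assert (1 <= B)%nat by (apply Nat.div_le_lower_bound; lia). nia. }
  destruct (exists_labeling_mispulls_ge K D e HK ltac:(lia) He Hsmall T B m w ps Hpol HBD)
    as [g [Hg Hbig]].
  pose proof (HM _ (env_batched_in_V K T VT D e g ltac:(lia) ltac:(lia) He Hvar)) as Hreg.
  destruct Hpol as [_ [Hw1 _]].
  rewrite regret_env_batched in Hreg by (auto; lra).
  apply Rmult_le_compat_l with (r := e) in Hbig; [|lra].
  apply Rmult_le_compat_l with (r := e) in HT; [|lra].
  lra.
Qed.

(* With [e = sqrt(K/D)/12] the condition [52 e^2 m <= 1] holds automatically,
   and the variation and rate requirements become polynomial in [D]. *)
Lemma sqrt_batching K T D VT : (2 <= K)%nat -> (K <= D <= T)%nat -> 0 <= VT ->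
  INR K * INR ((T - 1) / D) ^ 2 <= 144 * VT^2 * INR D ->
  VT^2 * INR D ^ 3 <= 64 * INR K * INR T ^ 2 ->
  valid_batching K T VT D (sqrt (INR K / INR D) / 12)
  /\ INR K * VT <= (24 * (sqrt (INR K / INR D) / 12))^3 * INR T.
Proof.
  intros HK HD HV Hvar Hrate. unfold valid_batching.
  assert (HKR : 2 <= INR K) by (apply (le_INR 2); lia).
  assert (HKD : INR K <= INR D) by (apply le_INR; lia).
  assert (HTpos : 0 <= INR T) by apply pos_INR.
  set (s := sqrt (INR K / INR D)).
  assert (Hs0 : 0 <= s) by apply sqrt_pos.
  assert (Hs2 : s^2 * INR D = INR K).
  { unfold s. rewrite pow2_sqrt; [field; lra|].
    unfold Rdiv. apply Rmult_le_pos; [lra|left; apply Rinv_0_lt_compat; lra]. }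
  assert (HDpos : 0 < INR D) by lra.
  assert (Hs1 : s <= 1).
  { apply Rle_of_pow2_le; [lra|]. apply (Rmult_le_reg_r (INR D)); lra. }
  set (q := (3 * D / (2 * K))%nat).
  assert (Hsq : s^2 * INR q <= 3/2).
  { assert (Hq : (2 * K * q <= 3 * D)%nat) by apply Nat.Div0.mul_div_le.
    apply le_INR in Hq. rewrite !mult_INR in Hq. simpl INR in Hq.
    apply (Rmult_le_reg_r (INR D)); [exact HDpos|].
    replace (s^2 * INR q * INR D) with (s^2 * INR D * INR q) by ring.
    rewrite Hs2. lra. }
  assert (Hq0 : 0 <= INR q) by apply pos_INR.
  repeat split; try lia.
  - unfold Rdiv. apply Rmult_le_pos; lra.
  - lra.
  - assert (s^2 <= 1) by nra. rewrite plus_INR, INR_1. lra.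
  - apply Rle_of_pow2_le; [exact HV|]. apply (Rmult_le_reg_r (INR D)); [exact HDpos|].
    replace ((s / 12 * INR ((T - 1) / D))^2 * INR D)
      with (s^2 * INR D * INR ((T - 1) / D)^2 / 144) by field.
    rewrite Hs2. lra.
  - assert (He3 : 0 <= (24 * (s / 12))^3) by (apply pow_le; lra).
    apply Rle_of_pow2_le; [apply Rmult_le_pos; lra|].
    apply (Rmult_le_reg_r (INR D ^ 3)); [apply pow_lt; exact HDpos|].
    replace (((24 * (s / 12))^3 * INR T)^2 * INR D ^ 3)
      with (64 * (s^2 * INR D)^3 * INR T^2) by field.
    rewrite Hs2.
    replace ((INR K * VT)^2 * INR D ^ 3) with (INR K ^ 2 * (VT^2 * INR D ^ 3)) by ring.
    assert (0 <= INR K ^ 2) by (apply pow_le; lra). nra.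
Qed.

Lemma Rpower_third_pow3 (u : R) : 0 < u -> Rpower u (1/3) ^ 3 = u.
Proof.
  intros Hu. rewrite <- Rpower_pow by apply exp_pos.
  rewrite Rpower_mult. replace (1/3 * INR 3) with 1 by (simpl; field). apply Rpower_1, Hu.
Qed.

Lemma Rpower_cube_root_le (u v y : R) : 0 < u -> 0 < v -> u * v^2 <= y^3 ->
  Rpower u (1/3) * Rpower v (2/3) <= y.
Proof.
  intros Hu Hv Huv.
  assert (Hb : Rpower v (2/3) = Rpower v (1/3) ^ 2).
  { rewrite <- Rpower_pow, Rpower_mult by apply exp_pos. f_equal. simpl. field. }
  rewrite Hb. apply Rle_of_pow3_le.
  replace ((Rpower u (1/3) * Rpower v (1/3) ^ 2)^3)
    with (Rpower u (1/3) ^ 3 * (Rpower v (1/3) ^ 3)^2) by ring.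
  rewrite !Rpower_third_pow3 by assumption. exact Huv.
Qed.

Lemma exists_nat_between (x : R) (T : nat) :
  0 <= x <= INR T -> exists D, (D <= T)%nat /\ x <= INR D <= x + 1.
Proof.
  intros Hx. destruct (archimed x) as [Hup1 Hup2].
  assert (Hup0 : (0 <= up x)%Z) by (apply le_IZR; simpl; lra).
  assert (HD : INR (Z.to_nat (up x)) = IZR (up x))
    by (rewrite INR_IZR_INZ, Z2Nat.id; auto).
  destruct (le_lt_dec (Z.to_nat (up x)) T) as [HT|HT].
  - exists (Z.to_nat (up x)). split; [exact HT|lra].
  - exists T. split; [lia|]. apply lt_INR in HT. lra.
Qed.

(* The batch length balancing the two constraints of [sqrt_batching] is the
   cube root of [K T^2 / V^2]. *)
Lemma cube_root_batching (T K : nat) (VT : R) :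
  (2 <= K)%nat -> (K <= T)%nat -> 1 <= INR K * VT <= INR T -> 64 * INR K < VT^2 * INR T ->
  exists D e, valid_batching K T VT D e /\ INR K * VT <= (24 * e)^3 * INR T.
Proof.
  intros HK HKT [HV1 HV2] Hlarge.
  assert (HKR : 2 <= INR K) by (apply (le_INR 2); lia).
  assert (HVpos : 0 < VT) by nra.
  set (x := Rpower (INR K * INR T ^ 2 / VT ^ 2) (1/3)).
  assert (Hx3 : VT^2 * x^3 = INR K * INR T^2).
  { unfold x. rewrite Rpower_third_pow3; [field; lra|].
    apply Rdiv_lt_0_compat; [apply Rmult_lt_0_compat|apply pow_lt]; nra. }
  assert (HKx : INR K <= x).
  { apply Rle_of_pow3_le. apply (Rmult_le_reg_l (VT^2)); [nra|]. rewrite Hx3.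
    assert ((INR K * VT)^2 <= INR T^2) by (apply pow_incr; lra).
    replace (VT^2 * INR K ^ 3) with (INR K * (INR K * VT)^2) by ring.
    apply Rmult_le_compat_l; lra. }
  assert (HxT : x <= INR T).
  { apply Rle_of_pow3_le. apply (Rmult_le_reg_l (VT^2)); [nra|]. rewrite Hx3.
    replace (VT^2 * INR T ^ 3) with (VT^2 * INR T * INR T^2) by ring.
    apply Rmult_le_compat_r; [apply pow2_ge_0|lra]. }
  destruct (exists_nat_between x T ltac:(lra)) as [D [HDT [HxD HDx]]].
  assert (HKD : (K <= D)%nat) by (apply INR_le; lra).
  exists D, (sqrt (INR K / INR D) / 12).
  apply sqrt_batching; [exact HK|lia|lra| |].
  - set (n := ((T - 1) / D)%nat).
    assert (HnD : INR n * INR D <= INR T).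
    { rewrite <- mult_INR. apply le_INR. unfold n.
      pose proof (Nat.Div0.mul_div_le (T - 1) D). lia. }
    apply (Rmult_le_reg_r (INR D ^ 2)); [apply pow_lt; lra|].
    assert (x^3 <= INR D ^ 3) by (apply pow_incr; lra).
    assert (0 <= INR n * INR D) by (apply Rmult_le_pos; apply pos_INR).
    assert ((INR n * INR D)^2 <= INR T ^ 2) by (apply pow_incr; lra).
    replace (INR K * INR n ^ 2 * INR D ^ 2) with (INR K * (INR n * INR D)^2) by ring.
    replace (144 * VT^2 * INR D * INR D ^ 2) with (144 * (VT^2 * INR D ^ 3)) by ring.
    nra.
  - assert (INR D ^ 3 <= 8 * x^3)
      by (replace (8 * x^3) with ((2 * x)^3) by ring; apply pow_incr; lra).
    nra.
Qed.

(* A single batch [D = T] needs no variation budget. *)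
Lemma batching_exists (T K : nat) (VT : R) :
  (1 <= T)%nat -> (2 <= K)%nat -> 1 <= INR K * VT <= INR T ->
  exists D e, valid_batching K T VT D e /\ INR K * VT <= (24 * e)^3 * INR T.
Proof.
  intros HT HK HV.
  assert (HKR : 2 <= INR K) by (apply (le_INR 2); lia).
  assert (HTR : 1 <= INR T) by (apply (le_INR 1); lia).
  assert (Hlast : ((T - 1) / T)%nat = O) by (apply Nat.div_small; lia).
  destruct (le_lt_dec K T) as [HKT|HTK].
  - destruct (Rlt_dec (64 * INR K) (VT^2 * INR T)) as [Hlarge|Hsmall].
    + apply cube_root_batching; assumption.
    + exists T, (sqrt (INR K / INR T) / 12).
      apply sqrt_batching; [exact HK|lia|nra| |].
      * rewrite Hlast. simpl INR. nra.
      * replace (VT^2 * INR T ^ 3) with (VT^2 * INR T * INR T^2) by ring.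
        apply Rmult_le_compat_r; [apply pow2_ge_0|lra].
  - exists T, (1/12). repeat split; try lia; try lra.
    + assert (Hq : (3 * T / (2 * K) <= 1)%nat).
      { apply Nat.lt_succ_r, Nat.Div0.div_lt_upper_bound; lia. }
      apply le_INR in Hq. rewrite INR_1 in Hq. rewrite plus_INR, INR_1. lra.
    + rewrite Hlast. simpl INR. nra.
Qed.

Theorem theorem1 :
  exists C : R, C > 0 /\
  forall (T K : nat) (VT : R),
    (1 <= T)%nat -> (2 <= K)%nat ->
    / INR K <= VT <= INR T / INR K ->
    forall (m : nat) (w : nat -> R) (ps : nat -> det_policy),
      is_randomized_policy K m w ps ->
      (* the supremum over mu in V of the regret is at least the bound:
         every upper bound M of the regret over V exceeds it *)
      forall M : R,
        (forall mu, in_V K T VT mu -> regret K T m w ps mu <= M) ->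
        C * Rpower (INR K * VT) (1/3) * Rpower (INR T) (2/3) <= M.
Proof.
  exists (/ 2304). split; [lra|].
  intros T K VT HT HK [HV1 HV2] m w ps Hpol M HM.
  assert (HKR : 0 < INR K) by (apply lt_0_INR; lia).
  assert (HKV : 1 <= INR K * VT <= INR T).
  { split.
    - apply (Rmult_le_compat_l (INR K)) in HV1; [|lra]. rewrite Rinv_r in HV1; lra.
    - apply (Rmult_le_compat_l (INR K)) in HV2; [|lra].
      replace (INR K * (INR T / INR K)) with (INR T) in HV2 by (field; lra). exact HV2. }
  destruct (batching_exists T K VT HT HK HKV) as (D & e & Hvalid & Hrate).
  pose proof (regret_ge_of_batching K T VT D e m w ps M HK Hvalid Hpol HM) as HMe.
  destruct Hvalid as (_ & He & _).
  assert (H24 : 24 * e * INR T <= 2304 * M) by lra.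
  enough (Hbound : Rpower (INR K * VT) (1/3) * Rpower (INR T) (2/3) <= 2304 * M) by lra.
  apply Rpower_cube_root_le; [lra|apply lt_0_INR; lia|].
  apply Rle_trans with ((24 * e * INR T)^3).
  - replace ((24 * e * INR T)^3) with ((24 * e)^3 * INR T * INR T^2) by ring.
    apply Rmult_le_compat_r; [apply pow2_ge_0|exact Hrate].
  - apply pow_incr. split; [|exact H24]. apply Rmult_le_pos; [lra|apply pos_INR].
Qed.
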